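(* Let $q=p^\ell$ be a prime power with $p$ prime and $d$ a positive integer; write $d+1=s(q-q/p)+r$ with integers $s\ge0$, $0\le r<q-q/p$. Let $k\ge s+1$ and define $e^\star\in\{0,\dots,q-1\}^k$ by $e^\star_i=q-q/p$ for $1\le i\le s$, $e^\star_{s+1}=q-1$, and $e^\star_j=0$ for $j\ge s+2$; let $d^\star=|e^\star|_1$. Then for every function $g:\mathbb{F}_q^k\to\mathbb{F}_q$ of degree at most $d^\star-1$, $$\Pr_{\alpha\in\mathbb{F}_q^k}\left[g(\alpha)\neq\alpha^{e^\star}\right]\geq\frac{1}{q^{s+1}},$$ where $\alpha$ is uniform in $\mathbb{F}_q^k$.
   Context: For $\alpha\in\mathbb{F}_q^k$ and $e\in\{0,\dots,q-1\}^k$, $\alpha^e=\prod_i\alpha_i^{e_i}$ (with $0^0=1$). The degree of a function $\mathbb{F}_q^k\to\mathbb{F}_q$ is the total degree of its unique polynomial representation with individual degrees at most $q-1$. *)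

From HB Require Import structures.
From mathcomp Require Import all_boot all_order all_algebra.
Set Implicit Arguments. Unset Strict Implicit. Unset Printing Implicit Defensive.
Import Order.TTheory GRing.Theory Num.Theory.
Local Open Scope ring_scope.

(* alpha^e = prod_i alpha_i^{e_i}  (with 0^0 = 1, since x ^+ 0 = 1) *)
Definition monom (F : finFieldType) (k : nat) (e : 'I_k -> nat)
  (a : {ffun 'I_k -> F}) : F := \prod_(i < k) a i ^+ e i.

Definition l1 (k : nat) (e : 'I_k -> nat) : nat := (\sum_(i < k) e i)%N.

(* g : F^k -> F has degree at most D: its (unique) polynomial representation
   with individual degrees at most q-1 (exponent vectors in {0..q-1}^k,
   encoded as 'I_k -> 'I_q) has total degree at most D, i.e. g is a linear
   combination of monomials alpha^e with e in {0..q-1}^k and |e|_1 <= D. *)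
Definition deg_le (F : finFieldType) (k : nat) (g : {ffun 'I_k -> F} -> F)
  (D : nat) : Prop :=
  exists c : {ffun 'I_k -> 'I_#|F|} -> F,
    (forall e : {ffun 'I_k -> 'I_#|F|}, (D < l1 (fun i => nat_of_ord (e i)))%N -> c e = 0) /\
    forall a, g a = \sum_(e : {ffun 'I_k -> 'I_#|F|})
                      c e * monom (fun i => nat_of_ord (e i)) a.

(* the exponent vector e^star (0-indexed: coordinates 0..s-1 get q - q/p,
   coordinate s gets q-1, the rest 0) *)
Definition estar (q p s k : nat) (i : 'I_k) : nat :=
  if (i < s)%N then (q - q %/ p)%N else if i == s :> nat then q.-1 else 0%N.

From HB Require Import structures.
From mathcomp Require Import all_boot all_order all_algebra all_field fingroup cyclic.
From mathcomp Require Import zify.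
Set Implicit Arguments. Unset Strict Implicit. Unset Printing Implicit Defensive.
Import Order.TTheory GRing.Theory Num.Theory.
Local Open Scope ring_scope.

(* Let S be the support of an exponent vector E with entries below q, and test
   g - x^E against the weight w(x) = prod_(i in S) x_i^(q-1-E_i) *
   prod_(i notin S) [x_i = b_i].  Since sum_(y in F) y^t = -[t = q-1] for
   t < 2(q-1), the sum sum_x x^e w(x) factors coordinatewise; it vanishes
   unless e agrees with E on S (forcing |e| >= |E|), and it does not vanish
   for e = E.  So w is orthogonal to every g of degree < |E| but not to x^E:
   g differs from x^E somewhere on each of the q^(k-|S|) fibres
   {x | x_i = b_i for i notin S}.  For e^star, |S| <= s+1. *)

Section PowerSums.

Variable F : finFieldType.
Local Notation q := #|F|.

Lemma card_finField_eq0 : q%:R = 0 :> F.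
Proof.
(* Lagrange in the additive group of F *)
by apply/eqP; rewrite -FinRing.zmodXgE -cardsT expg_cardG ?inE.
Qed.

Lemma expf_card_pred (y : F) : y != 0 -> y ^+ q.-1 = 1.
Proof.
move=> y_neq0; apply: (mulfI y_neq0); rewrite mulr1 -exprS.
by rewrite (ltn_predK (finNzRing_gt1 F)) expf_card.
Qed.

Lemma sum_expf_eq0 t : (0 < t < q.-1)%N -> \sum_(y : F) y ^+ t = 0.
Proof.
move=> /andP[t_gt0 t_lt].
have [a /andP[a_neq0 at_neq1]] : exists a : F, (a != 0) && (a ^+ t != 1).
  apply/existsP; apply: contraTT t_lt; rewrite negb_exists -leqNgt => /forallP at1.
  rewrite -(cardC1 0) cardE; apply: max_unity_roots => //; last exact: enum_uniq.
  apply/allP => y; rewrite mem_enum inE => y_neq0.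
  by have := at1 y; rewrite y_neq0 negbK unity_rootE.
have sum_scaled : \sum_(y : F) (a * y) ^+ t = \sum_(y : F) y ^+ t.
  by rewrite [RHS](reindex_inj (mulfI a_neq0)).
have : (a ^+ t - 1) * \sum_(y : F) y ^+ t = 0.
  rewrite mulrBl mul1r mulr_sumr -[X in _ - X]sum_scaled.
  by under [X in _ - X]eq_bigr do rewrite exprMn; rewrite subrr.
by move/eqP; rewrite mulf_eq0 subr_eq0 (negPf at_neq1) => /eqP.
Qed.

Lemma sum_expf t : (t < (q.-1).*2)%N ->
  \sum_(y : F) y ^+ t = if t == q.-1 then -1 else 0.
Proof.
have q1_gt0 : (0 < q.-1)%N by rewrite -subn1 subn_gt0 finNzRing_gt1.
move=> t_lt; case: (ltngtP t q.-1) => [t_lt_q1|t_gt_q1|->].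
- case: t t_lt_q1 {t_lt} => [|t] t_lt_q1; last exact: sum_expf_eq0.
  by under eq_bigr do rewrite expr0; rewrite sumr_const card_finField_eq0.
- rewrite -[RHS](sum_expf_eq0 (t := (t - q.-1)%N)); last by lia.
  apply: eq_bigr => y _; have [->|y_neq0] := eqVneq y 0.
    by rewrite !expr0n subn_eq0 leqNgt t_gt_q1 (gtn_eqF (ltn_trans q1_gt0 t_gt_q1)).
  by rewrite -{1}(subnK (ltnW t_gt_q1)) exprD expf_card_pred // mulr1.
- rewrite (bigD1 0) //= expr0n (gtn_eqF q1_gt0) add0r.
  under eq_bigr => y y_neq0 do rewrite expf_card_pred //.
  rewrite sumr_const (cardC1 0) -subn1 natrB ?card_finField_eq0 ?sub0r //.
  exact: ltnW (finNzRing_gt1 F).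
Qed.

End PowerSums.

Section DualWeight.

Variables (F : finFieldType) (k : nat).
Local Notation q := #|F|.
Local Notation point := {ffun 'I_k -> F}.

Lemma sum_monomM_prod (phi : 'I_k -> F -> F) (e : 'I_k -> nat) :
  \sum_(x : point) monom e x * \prod_i phi i (x i) =
  \prod_i \sum_(y : F) y ^+ e i * phi i y.
Proof. by rewrite bigA_distr_bigA; apply: eq_bigr => x _; rewrite -big_split. Qed.

Variables (E : 'I_k -> nat) (b : point).
Hypothesis E_lt_card : forall i, (E i < q)%N.

Definition dual_factor (i : 'I_k) (y : F) : F :=
  if E i == 0%N then (y == b i)%:R else y ^+ (q.-1 - E i).

Definition dual_weight (x : point) : F := \prod_i dual_factor i (x i).

Lemma sum_dual_factor (e : 'I_k -> nat) (i : 'I_k) : (e i < q)%N ->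
  \sum_(y : F) y ^+ e i * dual_factor i y =
  if E i == 0%N then b i ^+ e i else if e i == E i then -1 else 0.
Proof.
move=> e_lt; rewrite /dual_factor; have [Ei0|Ei_neq0] := eqVneq (E i) 0%N.
  rewrite (bigD1 (b i)) //= eqxx mulr1 big1 ?addr0 // => y /negPf->.
  by rewrite mulr0.
have := E_lt_card i; under eq_bigr do rewrite -exprD.
by move=> Ei_lt; rewrite sum_expf; [congr (if _ then _ else _); apply/eqP/eqP | ]; lia.
Qed.

Lemma sum_monom_dual_weight (e : 'I_k -> nat) : (forall i, e i < q)%N ->
  \sum_(x : point) monom e x * dual_weight x =
  \prod_i if E i == 0%N then b i ^+ e i else if e i == E i then -1 else 0.
Proof.
by move=> e_lt; rewrite sum_monomM_prod; apply: eq_bigr => i _; rewrite sum_dual_factor.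
Qed.

Lemma sum_monomE_dual_weight_neq0 : \sum_(x : point) monom E x * dual_weight x != 0.
Proof.
rewrite sum_monom_dual_weight //; apply/prodf_neq0 => i _.
by have [->|_] := eqVneq (E i) 0%N; rewrite ?expr0 ?eqxx ?oppr_eq0 oner_eq0.
Qed.

Lemma sum_monom_dual_weight_neq0_l1 (e : 'I_k -> nat) : (forall i, e i < q)%N ->
  \sum_(x : point) monom e x * dual_weight x != 0 -> (l1 E <= l1 e)%N.
Proof.
move=> e_lt; rewrite sum_monom_dual_weight // => /prodf_neq0 nz.
apply: leq_sum => i _; have := nz i isT.
have [->|_] //= := eqVneq (E i) 0%N.
by have [->|] := eqVneq (e i) (E i); rewrite ?eqxx.
Qed.

Lemma sum_low_deg_dual_weight (g : point -> F) (D : nat) :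
  deg_le g D -> (D < l1 E)%N -> \sum_(x : point) g x * dual_weight x = 0.
Proof.
move=> [c [c_high g_def] D_lt].
under eq_bigr do rewrite g_def mulr_suml.
rewrite exchange_big big1 //= => e _.
under eq_bigr do rewrite -mulrA.
rewrite -mulr_sumr.
have [->|nz] := eqVneq (\sum_(x : point) monom (fun i => nat_of_ord (e i)) x * dual_weight x) 0.
  by rewrite mulr0.
by rewrite c_high ?mul0r //; apply: leq_trans D_lt (sum_monom_dual_weight_neq0_l1 _ nz).
Qed.

Lemma dual_weight_eq0 (x : point) : ~~ [forall i, (E i == 0%N) ==> (x i == b i)] ->
  dual_weight x = 0.
Proof.
rewrite negb_forall => /existsP[i]; rewrite negb_imply => /andP[/eqP Ei0 xi_neq].
by rewrite /dual_weight (bigD1 i) //= /dual_factor Ei0 eqxx (negPf xi_neq) mul0r.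
Qed.

End DualWeight.

Section MonomialApproximation.

Variables (F : finFieldType) (k : nat).
Local Notation q := #|F|.
Local Notation point := {ffun 'I_k -> F}.

Lemma exists_neq_monom_in_fiber (E : 'I_k -> nat) (g : point -> F) (D : nat) (b : point) :
  (forall i, E i < q)%N -> deg_le g D -> (D < l1 E)%N ->
  exists2 x : point, g x != monom E x & forall i, E i = 0%N -> x i = b i.
Proof.
move=> E_lt g_deg D_lt.
pose in_fiber (x : point) := [forall i, (E i == 0%N) ==> (x i == b i)].
have [x /andP[x_fib gx]|no_x] := pickP [pred x | in_fiber x && (g x != monom E x)].
  by exists x => // i /eqP Ei0; move/forallP/(_ i): x_fib; rewrite Ei0 => /eqP.
have : \sum_(x : point) (monom E x - g x) * dual_weight E b x = 0.
  apply: big1 => x _; have [x_fib|x_nfib] := boolP (in_fiber x).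
    by move: (no_x x); rewrite /= x_fib => /negbFE/eqP->; rewrite subrr mul0r.
  by rewrite dual_weight_eq0 // mulr0.
under eq_bigr do rewrite mulrBl.
rewrite sumrB (sum_low_deg_dual_weight b E_lt g_deg D_lt) subr0 => /eqP.
by rewrite (negPf (sum_monomE_dual_weight_neq0 b E_lt)).
Qed.

Lemma leq_card_fiber_hitting (S : {pred 'I_k}) (Z : {set point}) :
  (forall b : point, exists2 x, x \in Z & forall i, i \notin S -> x i = b i) ->
  (q ^ k <= #|Z| * q ^ #|S|)%N.
Proof.
move=> Z_hits.
pose proj (x : point) := [ffun i => if i \in S then 0 else x i].
have fibers_sub : pffun_on 0 [predC S] predT \subset proj @: Z.
  apply/subsetP => b /familyP b_supp; have [x xZ xb] := Z_hits b.
  apply/imsetP; exists x => //; apply/ffunP => i; rewrite ffunE.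
  case: ifP => iS; last by rewrite xb ?iS.
  by have := b_supp i; rewrite !inE iS => /eqP.
have card_Z : (q ^ #|[predC S]| <= #|Z|)%N.
  have := subset_leq_card fibers_sub; rewrite card_pffun_on cardE -cardE.
  by move/leq_trans; apply; apply: leq_imset_card.
by rewrite -[k in (_ ^ k)%N]card_ord -(cardC S) expnD mulnC leq_mul.
Qed.

Theorem leq_card_neq_monom (E : 'I_k -> nat) (g : point -> F) (D : nat) :
  (forall i, E i < q)%N -> deg_le g D -> (D < l1 E)%N ->
  (q ^ k <= #|[set x | g x != monom E x]| * q ^ #|[pred i | E i != 0%N]|)%N.
Proof.
move=> E_lt g_deg D_lt; apply: leq_card_fiber_hitting => b.
have [x gx xb] := exists_neq_monom_in_fiber b E_lt g_deg D_lt.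
by exists x; rewrite ?inE // => i; rewrite inE negbK => /eqP; apply: xb.
Qed.

End MonomialApproximation.

Section ExtremalExponent.

Variables (q p s k : nat).
Local Notation e := (fun i : 'I_k => estar q p s i).

Lemma estar_lt (i : 'I_k) : (0 < q %/ p)%N -> (e i < q)%N.
Proof.
move=> qp_gt0; have q_gt0 : (0 < q)%N by apply: leq_trans qp_gt0 (leq_div _ _).
by rewrite /estar; case: ifP => _; [|case: ifP]; lia.
Qed.

Lemma l1_estar_gt0 : (1 < q)%N -> (s < k)%N -> (0 < l1 e)%N.
Proof.
by move=> q_gt1 s_lt; rewrite /l1 (bigD1 (Ordinal s_lt)) //= /estar ltnn eqxx; lia.
Qed.

Lemma card_estar_support : (#|[pred i | e i != 0%N]| <= s.+1)%N.
Proof.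
have supp_le (i : 'I_k) : e i != 0%N -> (i <= s)%N.
  by rewrite /estar; case: ltnP => [/ltnW //|_]; have [->|_] := eqVneq (i : nat) s.
have := @leq_card_in _ _ (fun i : 'I_k => inord i : 'I_s.+1) [pred i | e i != 0%N].
rewrite card_ord; apply => i j.
rewrite !inE => /supp_le i_le /supp_le j_le /(congr1 (@nat_of_ord _)).
by rewrite !inordK //; apply: val_inj.
Qed.

End ExtremalExponent.

Theorem lemma4p2 (F : finFieldType) (p l d k : nat) :
  prime p -> #|F| = (p ^ l)%N -> (0 < d)%N ->
  let q := #|F| in
  let s := ((d + 1) %/ (q - q %/ p))%N in
  let r := ((d + 1) %% (q - q %/ p))%N in
  (s + 1 <= k)%N ->
  let e := fun i : 'I_k => estar q p s i in
  let dstar := l1 e in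
  forall g : {ffun 'I_k -> F} -> F,
    deg_le g dstar.-1 ->
    1 / (q ^ (s + 1))%:R <=
      (#|[set a : {ffun 'I_k -> F} | g a != monom e a]|%:R / (q ^ k)%:R : rat).
Proof.
move=> p_prime q_def _ q s r s_lt_k e dstar g g_deg.
have q_gt1 : (1 < q)%N := finNzRing_gt1 F.
have qp_gt0 : (0 < q %/ p)%N.
  case: l q_def => [|l] q_def; first by move: q_gt1; rewrite /q q_def.
  by rewrite divn_gt0 ?prime_gt0 // /q q_def expnS leq_pmulr // expn_gt0 prime_gt0.
have s_lt : (s < k)%N by rewrite -addn1.
have dstar_gt0 : (0 < dstar)%N by apply: l1_estar_gt0.
have := leq_card_neq_monom (fun i => estar_lt s i qp_gt0) g_deg.
rewrite ltn_predL => /(_ dstar_gt0) card_le.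
have q_pow_gt0 n : (0 < (q ^ n)%:R :> rat) by rewrite ltr0n expn_gt0 ltnW.
rewrite ler_pdivlMr // mul1r ler_pdivrMl // -natrM ler_nat addn1 mulnC.
apply: leq_trans card_le (leq_mul (leqnn _) _).
exact: leq_pexp2l (ltnW q_gt1) (card_estar_support _ _ _ _).
Qed.
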